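(* Let $M,B,\sigma>0$ and $\mu>0$, and let $X$ be the cumulative distribution function of the normal distribution with mean $\mu$ and variance $\sigma^2$. The map $p\mapsto \frac{MB(1-X(p))}{p}$ is a strictly decreasing bijection from $(0,\infty)$ onto $(0,\infty)$; let $y:(0,\infty)\to(0,\infty)$ denote its inverse, so that $D=MB(1-X(y(D)))/y(D)$. Then the function $F(D)=y(D)\,D$ is concave on $D>0$.
   Context: $F(D)=y(D)D$ is the advertising revenue of a content provider when user demand is $D$: $M$ advertisers with budget $B$ and normally distributed valuations $v$ per attention demand $MB(1-X(p^a))/p^a$ attentions at price $p^a$, and the provider sets the price $p^a=y(D)$ at which this equals $D$. *)

From HB Require Import structures.
From mathcomp Require Import all_boot all_order all_algebra.
From mathcomp Require Import all_classical all_reals all_analysis.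
Set Implicit Arguments. Unset Strict Implicit. Unset Printing Implicit Defensive.
Import Order.TTheory GRing.Theory Num.Theory.
Local Open Scope classical_set_scope.
Local Open Scope ring_scope.

(* CDF of the normal distribution with mean m and standard deviation s
   (variance s^2): X(p) = P(]-oo, p]) under the library's normal_prob. *)
Definition normal_cdf {R : realType} (m s p : R) : R :=
  fine (normal_prob m s `]-oo, p]).

(* Attention demanded by M advertisers of budget B at price p. *)
Definition attention_demand {R : realType} (M B m s p : R) : R :=
  M * B * (1 - normal_cdf m s p) / p.

Definition concave_on_pos {R : realType} (F : R -> R) : Prop :=
  forall D1 D2 t : R, 0 < D1 -> 0 < D2 -> 0 <= t -> t <= 1 ->
    t * F D1 + (1 - t) * F D2 <= F (t * D1 + (1 - t) * D2).

From HB Require Import structures.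
From mathcomp Require Import all_boot all_order all_algebra.
From mathcomp Require Import all_classical all_reals all_analysis.
From mathcomp Require Import ring lra.
Import Order.TTheory GRing.Theory Num.Theory.
Import numFieldNormedType.Exports.
Local Open Scope classical_set_scope.
Local Open Scope ring_scope.

(* Parametrise by the price p: D = g p and F D = G p, where G p = p * g p
   = M B (1 - X p) is the advertisers' total spending.  As g decreases, F is
   concave as soon as the chord slopes of G against g increase with p, and by
   Cauchy's mean value theorem it suffices that G'/g' = p^2 phi/(p phi + 1 - X)
   is nondecreasing, i.e. that 1/p + (1 - X p)/(p^2 phi p) is nonincreasing.
   This holds because the Mills ratio (1 - X)/phi of the Gaussian decreases, a
   consequence of the log-concavity of its density:
   phi q * phi (p + t) <= phi p * phi (q + t) for q < p and 0 <= t. *)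

Section normal_cdf.
Context {R : realType} {m s : R}.
Hypothesis s_gt0 : 0 < s.
Local Notation phi := (normal_pdf m s).
Local Notation X := (normal_cdf m s).

Lemma gt0_normal_pdfE x : phi x = normal_peak s * normal_fun m s x.
Proof. by rewrite /normal_pdf gt_eqF. Qed.

Lemma normal_pdf_gt0 x : 0 < phi x.
Proof. by rewrite gt0_normal_pdfE mulr_gt0 ?expR_gt0 ?normal_peak_gt0 ?gt_eqF. Qed.

Lemma is_derive_normal_cdf (x : R) : is_derive x (1 : R) X (phi x).
Proof.
have [||||dX dXE] := @continuous_FTC1 R phi -oo%O x (x + 1).
- by rewrite ltrDl.
- exact: integrableS (integrable_normal_pdf m s).
- by rewrite ltNyr.
- exact: continuous_normal_pdf (lt0r_neq0 s_gt0) x.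
by apply: DeriveDef => //; rewrite -derive1E.
Qed.

Lemma continuous_normal_cdf : continuous X.
Proof.
move=> x; apply/differentiable_continuous/derivable1_diffP.
exact: @ex_derive _ _ _ _ _ _ _ (is_derive_normal_cdf x).
Qed.

(* [X] is the cdf of the identity random variable on [normal_prob m s]. *)
Let idTR : measurableTypeR R -> R := idfun.

#[local] HB.instance Definition _ :=
  @isMeasurableFun.Build _ _ _ _ idTR (@measurable_id _ _ setT).

Lemma normal_cdfE x : X x = fine (cdf (idTR : {RV normal_prob m s >-> R}) x).
Proof. by rewrite /cdf /distribution /pushforward preimage_id. Qed.

Lemma normal_cdf_ge0 x : 0 <= X x.
Proof. by rewrite normal_cdfE fine_ge0. Qed.

Lemma normal_cdf_le1 x : X x <= 1.
Proof. by rewrite normal_cdfE -lee_fin fineK ?fin_num_measure ?cdf_le1. Qed.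

Lemma normal_cdf_ler x y : x <= y -> X x <= X y.
Proof. by move=> xy; rewrite !normal_cdfE fine_le ?fin_num_measure ?cdf_nondecreasing. Qed.

Lemma cvg_normal_cdf : X x @[x --> +oo] --> (1 : R).
Proof.
have -> : X = fine \o cdf (idTR : {RV normal_prob m s >-> R}).
  by apply/funext => x; rewrite normal_cdfE.
by apply: fine_cvg; apply: cvg_cdfy1.
Qed.

Lemma normal_cdf_ltr x y : x < y -> X x < X y.
Proof.
move=> xy; have [c _ XE] := MVT xy (fun z _ => is_derive_normal_cdf z)
  (continuous_subspaceT continuous_normal_cdf).
by rewrite -subr_gt0 XE mulr_gt0 ?normal_pdf_gt0 ?subr_gt0.
Qed.

Lemma normal_cdf_lt1 x : X x < 1.
Proof.
by apply: lt_le_trans (normal_cdf_le1 (x + 1)); apply: normal_cdf_ltr; rewrite ltrDl.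
Qed.

Lemma cvg_normal_cdf_shift (k : R) : X (x + k) @[x --> +oo] --> (1 : R).
Proof.
apply: (@cvg_comp _ _ _ (fun x => x + k) X _ +oo%R); last exact: cvg_normal_cdf.
apply/cvgryPge => A.
near=> x; rewrite -lerBlDr; near: x; exact: nbhs_pinfty_ge (num_real _).
Unshelve. all: by end_near. Qed.

Lemma is_derive_normal_cdf_shift (k x : R) :
  is_derive x (1 : R) (fun t => X (t + k)) (phi (x + k)).
Proof.
have := @is_derive1_comp _ X (shift k) x _ _ (is_derive_normal_cdf (x + k))
  (is_derive_shift x 1 k).
by rewrite mulr1.
Qed.

Lemma normal_pdf_shift_le q p t : q < p -> 0 <= t ->
  phi q * phi (p + t) <= phi p * phi (q + t).
Proof.
move=> qp t0; have s2 : 0 < s ^+ 2 *+ 2 by rewrite pmulrn_lgt0 // exprn_gt0.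
rewrite !gt0_normal_pdfE /normal_fun mulrACA [leRHS]mulrACA.
rewrite ler_pM2l ?mulr_gt0 ?normal_peak_gt0 ?lt0r_neq0 //.
by rewrite -!expRD ler_expR -!mulrDl ler_pM2r ?invr_gt0 //; nra.
Qed.

Lemma normal_cdf_increment_le q p N : q < p -> 0 < N ->
  phi q * (X (N + p) - X p) <= phi p * (X (N + q) - X q).
Proof.
move=> qp N0.
pose A t := phi q * X (t + p) - phi p * X (t + q).
have dA t : is_derive t (1 : R) A (phi q * phi (t + p) - phi p * phi (t + q)).
  exact: is_deriveB (is_deriveZ (phi q) (is_derive_normal_cdf_shift p t))
                    (is_deriveZ (phi p) (is_derive_normal_cdf_shift q t)).
have cA : {within `[0, N], continuous A}.
  apply: derivable_within_continuous => t _; exact: @ex_derive _ _ _ _ _ _ _ (dA t).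
have [c /[!in_itv]/= /andP[c0 _] AE] := MVT N0 (fun t _ => dA t) cA.
have : A N - A 0 <= 0.
  rewrite AE subr0 mulr_le0_ge0 ?(ltW N0) // subr_le0.
  by rewrite addrC [c + q]addrC normal_pdf_shift_le ?ltW.
by rewrite /A !add0r; lra.
Qed.

Lemma normal_tail_ratio_le q p : q < p -> phi q * (1 - X p) <= phi p * (1 - X q).
Proof.
move=> qp.
have tail j k : phi j * (X (N + k) - X k) @[N --> +oo] --> phi j * (1 - X k).
  apply: cvgMr; apply: cvgB; last exact: cvg_cst.
  exact: cvg_normal_cdf_shift.
apply: (ler_cvg_to (tail q p) (tail p q)).
near=> N; apply: normal_cdf_increment_le qp _.
near: N; exact: nbhs_pinfty_gt (num_real _).
Unshelve. all: by end_near. Qed.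
End normal_cdf.

Section chord_slopes.
Context {R : realType} (f g df dg : R -> R).
Hypothesis f_der : forall x : R, 0 < x -> is_derive x (1 : R) f (df x).
Hypothesis g_der : forall x : R, 0 < x -> is_derive x (1 : R) g (dg x).
Hypothesis dg_neq0 : forall x : R, 0 < x -> dg x != 0.
Hypothesis derive_ratio_le : forall a b : R, 0 < a -> a < b -> df a / dg a <= df b / dg b.

Let continuous_pos {h dh : R -> R} (a b : R) : 0 < a ->
  (forall x : R, 0 < x -> is_derive x (1 : R) h (dh x)) -> {within `[a, b], continuous h}.
Proof.
move=> a0 h_der; apply: derivable_within_continuous => x /[!in_itv]/= /andP[ax _].
exact: @ex_derive _ _ _ _ _ _ _ (h_der x (lt_le_trans a0 ax)).
Qed.

Let chord_slopeE (a b : R) : 0 < a -> a < b ->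
  exists2 c, a < c < b & (f b - f a) / (g b - g a) = df c / dg c.
Proof.
move=> a0 ab; have pos (x : R) : x \in `]a, b[ -> 0 < x.
  by rewrite in_itv => /andP[/(lt_trans a0)].
have [c cab <-] := cauchy_MVT ab (continuous_pos a b a0 f_der)
  (continuous_pos a b a0 g_der) (fun x xab => f_der x (pos x xab))
  (fun x xab => g_der x (pos x xab)) (fun x xab => dg_neq0 x (pos x xab)).
by exists c; rewrite -?in_itv.
Qed.

Lemma chord_slope_le (a b c : R) : 0 < a -> a < b -> b < c ->
  (f b - f a) / (g b - g a) <= (f c - f b) / (g c - g b).
Proof.
move=> a0 ab bc; have b0 := lt_trans a0 ab.
have [x /andP[ax xb] ->] := chord_slopeE a b a0 ab.
have [z /andP[bz zc] ->] := chord_slopeE b c b0 bc.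
exact: derive_ratio_le x z (lt_trans a0 ax) (lt_trans xb bz).
Qed.
End chord_slopes.

Lemma concave_on_posW {R : realType} (F : R -> R) :
  (forall D1 D2 t, 0 < D1 -> D1 < D2 -> 0 < t -> t < 1 ->
     t * F D1 + (1 - t) * F D2 <= F (t * D1 + (1 - t) * D2)) ->
  concave_on_pos F.
Proof.
move=> Fconc D1 D2 t D1_gt0 D2_gt0.
rewrite le_eqVlt => /predU1P[<- _|t_gt0]; first by rewrite !mul0r !subr0 !mul1r !add0r.
rewrite le_eqVlt => /predU1P[->|t_lt1]; first by rewrite !subrr !mul0r !mul1r !addr0.
case: (ltgtP D1 D2) => [D12|D21|<-]; first exact: Fconc.
- have := Fconc _ _ (1 - t) D2_gt0 D21; rewrite subKr subr_gt0 ltrBlDr ltrDl.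
  by move=> /(_ t_lt1 t_gt0); rewrite addrC [_ + t * D1]addrC.
- by rewrite -mulrDl subrKC !mul1r -mulrDl subrKC mul1r.
Qed.

Lemma eq_concave_on_pos {R : realType} (F F' : R -> R) :
  (forall D, 0 < D -> F D = F' D) -> concave_on_pos F -> concave_on_pos F'.
Proof.
move=> FF' Fconc D1 D2 t D1_gt0 D2_gt0 t_ge0 t_le1.
have Dt_gt0 : 0 < t * D1 + (1 - t) * D2 by nra.
by rewrite -!FF' //; exact: Fconc.
Qed.

Section concave_reparametrization.
Context {R : realType} (g G y : R -> R).
Hypothesis g_decr : forall {p q : R}, 0 < p -> p < q -> g q < g p.
Hypothesis y_inv : forall {D : R}, 0 < D -> 0 < y D /\ g (y D) = D.
Hypothesis chord_le : forall {a b c : R}, 0 < a -> a < b -> b < c ->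
  (G b - G a) / (g b - g a) <= (G c - G b) / (g c - g b).

Let inverse_decr {D D' : R} : 0 < D -> D < D' -> y D' < y D.
Proof.
move=> D0 DD'; have D'0 := lt_trans D0 DD'.
have [y0 gy] := y_inv D0; have [y0' gy'] := y_inv D'0.
case: (ltgtP (y D') (y D)) => // yDD'.
  by have := g_decr y0 yDD'; rewrite gy gy' => /(lt_trans DD'); rewrite ltxx.
by move: DD'; rewrite -gy -gy' yDD' ltxx.
Qed.

Lemma concave_on_pos_comp_inverse : concave_on_pos (G \o y).
Proof.
apply: concave_on_posW => D1 D2 t D1_gt0 D12 t_gt0 t_lt1 /=.
set Dt := t * D1 + (1 - t) * D2.
have D1t : D1 < Dt by rewrite /Dt; nra.
have Dt2 : Dt < D2 by rewrite /Dt; nra.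
have Dt_gt0 := lt_trans D1_gt0 D1t; have D2_gt0 := lt_trans Dt_gt0 Dt2.
have := chord_le (y_inv D2_gt0).1 (inverse_decr Dt_gt0 Dt2) (inverse_decr D1_gt0 D1t).
rewrite (y_inv D2_gt0).2 (y_inv Dt_gt0).2 (y_inv D1_gt0).2.
have -> : Dt - D2 = - (t * (D2 - D1)) by rewrite /Dt; ring.
have -> : D1 - Dt = - ((1 - t) * (D2 - D1)) by rewrite /Dt; ring.
have d_gt0 : 0 < D2 - D1 by rewrite subr_gt0.
rewrite !invrN !mulrN lerN2 ler_pdivrMr ?mulr_gt0 ?subr_gt0 //.
rewrite mulrAC ler_pdivlMr ?mulr_gt0 ?subr_gt0 //.
set F1 := G (y D1); set F2 := G (y D2); set Ft := G (y Dt).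
nra.
Qed.
End concave_reparametrization.

Definition advertising_spend {R : realType} (M B m s p : R) : R :=
  M * B * (1 - normal_cdf m s p).

Section attention_demand.
Context {R : realType} {M B m s : R}.
Hypotheses (M_gt0 : 0 < M) (B_gt0 : 0 < B) (s_gt0 : 0 < s).
Local Notation phi := (normal_pdf m s).
Local Notation X := (normal_cdf m s).
Local Notation g := (attention_demand M B m s).
Local Notation G := (advertising_spend M B m s).

Let K_gt0 : 0 < M * B. Proof. exact: mulr_gt0. Qed.

Let phi_gt0 p : 0 < phi p. Proof. exact: normal_pdf_gt0. Qed.

Let tail_gt0 p : 0 < 1 - X p.
Proof. by rewrite subr_gt0 (normal_cdf_lt1 s_gt0). Qed.

Lemma advertising_spendE p : 0 < p -> G p = p * g p.
Proof. by move=> p_gt0; rewrite /attention_demand mulrCA divff ?mulr1 ?gt_eqF. Qed.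

Lemma is_derive_advertising_spend (p : R) :
  is_derive p (1 : R) G (- (M * B) * phi p).
Proof.
apply: is_derive_eq (is_deriveZ (M * B) (is_deriveB (is_derive_cst (1 : R) p 1)
  (is_derive_normal_cdf s_gt0 p))) _.
by rewrite sub0r scalerN mulNr.
Qed.

Lemma is_derive_attention_demand (p : R) : 0 < p ->
  is_derive p (1 : R) g (- (M * B) * (p * phi p + (1 - X p)) / p ^+ 2).
Proof.
move=> p_gt0.
apply: is_derive_eq (is_deriveM (is_derive_advertising_spend p)
  (is_deriveV (f := id) (lt0r_neq0 p_gt0) (is_derive_id p (1 : R)))) _.
rewrite /advertising_spend /GRing.scale /=.
by field; exact: lt0r_neq0.
Qed.

Let derive_ratioE p : 0 < p ->
  (- (M * B) * phi p) / (- (M * B) * (p * phi p + (1 - X p)) / p ^+ 2) =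
  (p^-1 + (1 - X p) / phi p / p ^+ 2)^-1.
Proof.
move=> p_gt0; have phi_p := phi_gt0 p.
field; apply/and5P; split; apply: lt0r_neq0 => //.
by rewrite addr_gt0 ?mulr_gt0.
Qed.

Lemma spend_demand_derive_ratio_le a b : 0 < a -> a < b ->
  (- (M * B) * phi a) / (- (M * B) * (a * phi a + (1 - X a)) / a ^+ 2) <=
  (- (M * B) * phi b) / (- (M * B) * (b * phi b + (1 - X b)) / b ^+ 2).
Proof.
move=> a_gt0 ab; have b_gt0 := lt_trans a_gt0 ab.
have [phia phib] := (phi_gt0 a, phi_gt0 b).
rewrite !derive_ratioE // lef_pV2 ?posrE ?addr_gt0 ?divr_gt0 ?invr_gt0 ?exprn_gt0 //.
apply: lerD; first by rewrite lef_pV2 ?posrE // ltW.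
apply: ler_pM.
- by rewrite divr_ge0 ?ltW.
- by rewrite invr_ge0 exprn_ge0 ?ltW.
- rewrite ler_pdivrMr // mulrAC ler_pdivlMr // mulrC [leRHS]mulrC.
  exact: normal_tail_ratio_le.
- by rewrite lef_pV2 ?posrE ?exprn_gt0 // ler_pXn2r ?nnegrE ?ltW.
Qed.

Lemma attention_demand_gt0 p : 0 < p -> 0 < g p.
Proof. by move=> p_gt0; rewrite divr_gt0 ?mulr_gt0. Qed.

Lemma attention_demand_decr p q : 0 < p -> p < q -> g q < g p.
Proof.
move=> p_gt0 pq; have q_gt0 := lt_trans p_gt0 pq.
rewrite ltr_pM ?invr_ge0 ?ltW ?mulr_gt0 //.
- by rewrite ltr_pM2l // ltrD2l ltrN2 normal_cdf_ltr.
- by rewrite ltf_pV2.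
Qed.

Lemma attention_demand_surj D : 0 < D -> exists p, 0 < p /\ g p = D.
Proof.
move=> D_gt0; pose a := Num.min 1 (M * B * (1 - X 1) / D); pose b := a + M * B / D.
have a_gt0 : 0 < a by rewrite lt_min ltr01 divr_gt0 ?mulr_gt0.
have ab : a < b by rewrite ltrDl divr_gt0.
have b_gt0 := lt_trans a_gt0 ab.
have gb_le : g b <= D.
  have spend_le : M * B * (1 - X b) <= M * B.
    by rewrite ler_piMr ?(ltW K_gt0) // lerBlDr lerDl normal_cdf_ge0.
  have Db : D * b = D * a + M * B by rewrite /b mulrDr mulrCA divff ?mulr1 ?gt_eqF.
  have Da := mulr_gt0 D_gt0 a_gt0.
  by rewrite ler_pdivrMr // [D * _]mulrC in Db *; lra.
have ga_ge : D <= g a.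
  have spend_ge : M * B * (1 - X 1) <= M * B * (1 - X a).
    by rewrite ler_pM2l // lerD2l lerN2 normal_cdf_ler // ge_min lexx.
  have : a <= M * B * (1 - X 1) / D by rewrite ge_min lexx orbT.
  by rewrite ler_pdivlMr // ler_pdivlMr //; lra.
have g_cont : {within `[a, b], continuous g}.
  apply: derivable_within_continuous => x /[!in_itv]/= /andP[ax _].
  exact: @ex_derive _ _ _ _ _ _ _ (is_derive_attention_demand x (lt_le_trans a_gt0 ax)).
have D_between : Num.min (g a) (g b) <= D <= Num.max (g a) (g b).
  by rewrite ge_min gb_le orbT le_max ga_ge.
have [c /[!in_itv]/= /andP[ac _] gc] := IVT (ltW ab) g_cont D_between.
by exists c; split; first exact: lt_le_trans ac.
Qed.

Lemma spend_demand_chord_slope_le a b c : 0 < a -> a < b -> b < c ->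
  (G b - G a) / (g b - g a) <= (G c - G b) / (g c - g b).
Proof.
apply: chord_slope_le.
- by move=> x _; exact: is_derive_advertising_spend.
- exact: is_derive_attention_demand.
- move=> x x_gt0; have := phi_gt0 x => phi_x.
  have : 0 < x * phi x + (1 - X x) by rewrite addr_gt0 ?mulr_gt0 ?tail_gt0.
  by move=> ?; rewrite !mulf_neq0 ?invr_neq0 ?oppr_eq0 ?expf_neq0 ?gt_eqF.
- exact: spend_demand_derive_ratio_le.
Qed.
End attention_demand.

Theorem lemma7 (R : realType) (M B sigma mu : R) :
  0 < M -> 0 < B -> 0 < sigma -> 0 < mu ->
  let g := attention_demand M B mu sigma in
  ((forall p q : R, 0 < p -> p < q -> g q < g p) /\
   (forall p : R, 0 < p -> 0 < g p) /\
   (forall D : R, 0 < D -> exists p : R, 0 < p /\ g p = D)) /\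
  (forall y : R -> R,
     (forall D : R, 0 < D -> 0 < y D /\ g (y D) = D) ->
     concave_on_pos (fun D => y D * D)).
Proof.
move=> M_gt0 B_gt0 sigma_gt0 _ g.
have g_decr : forall p q : R, 0 < p -> p < q -> g q < g p.
  exact: attention_demand_decr.
split; first split; [exact: g_decr | split |].
- exact: attention_demand_gt0.
- exact: attention_demand_surj.
move=> y y_inv.
have spend_concave := concave_on_pos_comp_inverse _ _ _ g_decr y_inv
  (spend_demand_chord_slope_le M_gt0 B_gt0 sigma_gt0).
apply: (eq_concave_on_pos _ _ _ spend_concave) => D D_gt0 /=.
have [y_gt0 gyD] := y_inv D D_gt0.
by rewrite advertising_spendE // -/g gyD.
Qed.
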